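(* Let $G$ and $H$ be finitely generated groups whose growth functions $g_G(n)$ and $g_H(n)$ are polynomial and exponential, respectively. Then for any polynomial $t(n)$, $\mathfrak{L}(H)\not\subseteq \mathfrak{L}(G)^w_{t(n)}$.
   Context: For a group $G$ with identity $e$, a $G$-automaton is a tuple $(Q,\Sigma,G,\delta,q_0,Q_a)$ where $Q$ is a finite set of states, $\Sigma$ a finite input alphabet, $q_0\in Q$ the initial state, $Q_a\subseteq Q$ the accepting states, and $\delta$ assigns to each $(q,\sigma)\in Q\times(\Sigma\cup\{\varepsilon\})$ a finite set of pairs $(q',m)\in Q\times G$. The register holds an element of $G$, initially $e$; using a transition $(q',m)\in\delta(q,\sigma)$ (one step) the automaton reads $\sigma$ (or nothing), moves to $q'$ and replaces the register content $x$ by $xm$. A word is accepted if some computation reads it entirely and ends in an accepting state with register equal to $e$. $\mathfrak{L}(G)$ is the class of languages recognized by $G$-automata. A $G$-automaton recognizing $\mathtt{L}$ is weakly $t(n)$ time-bounded if every $x\in\mathtt{L}$ with $|x|=n$ has an accepting computation of at most $t(n)$ steps; $\mathfrak{L}(G)^w_{t(n)}$ is the class of languages recognized by such automata. The growth function $g_G(n)$ of $G$ with respect to a finite generating set $X$ is the number of elements of $G$ representable by words of length at most $n$ over $X\cup X^{-1}$. *)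

From mathcomp Require Import all_boot monoid.

Set Implicit Arguments.
Unset Strict Implicit.
Unset Printing Implicit Defensive.

Definition gprod (G : groupType) (w : seq G) : G := foldl (@mul G) (@one G) w.

Definition word_over (G : groupType) (X : seq G) (w : seq G) : Prop :=
  forall y, y \in w -> (y \in X) \/ (@inv G y \in X).

Definition generates (G : groupType) (X : seq G) : Prop :=
  forall g : G, exists w : seq G, word_over X w /\ gprod w = g.

Definition in_ball (G : groupType) (X : seq G) (n : nat) (g : G) : Prop :=
  exists w : seq G, word_over X w /\ size w <= n /\ gprod w = g.

(* g_G(n) <= b  : every duplicate-free list of ball elements has size <= b *)
Definition growth_le (G : groupType) (X : seq G) (n b : nat) : Prop :=
  forall l : seq G, uniq l -> (forall g, g \in l -> in_ball X n g) -> size l <= b.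

Definition growth_ge_ratio (G : groupType) (X : seq G) (n p q : nat) : Prop :=
  exists l : seq G, uniq l /\ (forall g, g \in l -> in_ball X n g) /\
                    p ^ n <= q ^ n * size l.

Definition fg_polynomial_growth (G : groupType) : Prop :=
  exists X : seq G, generates X /\
    exists c d : nat, forall n, growth_le X n (c * n ^ d + c).

(* G is finitely generated with exponential growth function:
   g_G(n) >= a^n for some rational a = p/q > 1 and all large n *)
Definition fg_exponential_growth (G : groupType) : Prop :=
  exists X : seq G, generates X /\
    exists p q N : nat, 0 < q < p /\
      forall n, N <= n -> growth_ge_ratio X n p q.

Record gautomaton (G : groupType) (Sigma : finType) := GAutomaton {
  state : finType;
  delta : state -> option Sigma -> seq (state * G);   (* None = epsilon *)
  q0 : state;
  accepting : pred state
}.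

(* a computation = list of steps (label read, (target state, multiplier)) *)
Definition step (G : groupType) (Sigma : finType) (A : gautomaton G Sigma) :=
  (option Sigma * (state A * G))%type.

Fixpoint valid_from (G : groupType) (Sigma : finType) (A : gautomaton G Sigma)
    (q : state A) (c : seq (step A)) : Prop :=
  match c with
  | [::] => True
  | (s, (q', m)) :: c' => (q', m) \in @delta _ _ A q s /\ valid_from q' c'
  end.

Definition comp_word (G : groupType) (Sigma : finType) (A : gautomaton G Sigma)
    (c : seq (step A)) : seq Sigma := pmap id (map fst c).

Definition comp_final (G : groupType) (Sigma : finType) (A : gautomaton G Sigma)
    (c : seq (step A)) : state A := last (q0 A) (map (fun s => s.2.1) c).

Definition comp_register (G : groupType) (Sigma : finType) (A : gautomaton G Sigma)
    (c : seq (step A)) : G := gprod (map (fun s => s.2.2) c).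

Arguments valid_from {G Sigma} A q c.
Arguments comp_word {G Sigma} A c.
Arguments comp_final {G Sigma} A c.
Arguments comp_register {G Sigma} A c.

Definition accepting_comp (G : groupType) (Sigma : finType) (A : gautomaton G Sigma)
    (x : seq Sigma) (c : seq (step A)) : Prop :=
  [/\ valid_from A (q0 A) c, comp_word A c = x,
      @accepting _ _ A (comp_final A c) & comp_register A c = @one G].

Arguments accepting_comp {G Sigma} A x c.

Definition accepts (G : groupType) (Sigma : finType) (A : gautomaton G Sigma)
    (x : seq Sigma) : Prop := exists c, accepting_comp A x c.

Definition language (Sigma : finType) := seq Sigma -> Prop.

Definition recognizes (G : groupType) (Sigma : finType) (A : gautomaton G Sigma)
    (L : language Sigma) : Prop := forall x, L x <-> accepts A x.

Definition weakly_time_bounded (G : groupType) (Sigma : finType)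
    (A : gautomaton G Sigma) (L : language Sigma) (t : nat -> nat) : Prop :=
  forall x, L x -> exists c, accepting_comp A x c /\ size c <= t (size x).

Definition in_LG (G : groupType) (Sigma : finType) (L : language Sigma) : Prop :=
  exists A : gautomaton G Sigma, recognizes A L.

Definition in_LG_weak (G : groupType) (t : nat -> nat) (Sigma : finType)
    (L : language Sigma) : Prop :=
  exists A : gautomaton G Sigma, recognizes A L /\ weakly_time_bounded A L t.

Definition natpoly (cs : seq nat) (n : nat) : nat :=
  \sum_(i < size cs) nth 0 cs i * n ^ i.

From mathcomp Require Import all_boot monoid zify.
Set Implicit Arguments.
Unset Strict Implicit.
Unset Printing Implicit Defensive.

(* The witness is the word problem of H, which an H-automaton recognizes by
   multiplying its register by the letters it reads.  Suppose a G-automaton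
   with state set Q recognizes it in time t.  For h in the n-ball of H, run it
   on u u^-1, u a word of length at most n for h, and stop after u: the
   configuration (state, register) reached there determines h, since a
   continuation accepted from it is accepted after every prefix reaching it and
   spells h^-1.  The register lies in the ball of radius K t(2n) of G, K
   bounding the lengths of the multipliers, so the n-ball of H has at most
   |Q| g_G(K t(2n)) elements: a polynomial bound against exponential growth. *)

Lemma leq_expn2r m n e : m <= n -> m ^ e <= n ^ e.
Proof. by case: e => [|e] // le_mn; rewrite leq_exp2r. Qed.

(* Bernoulli's inequality (1 + 1/q)^k >= 1 + k/q, cleared of denominators. *)
Lemma bernoulli_expn q k : q ^ k * (q + k) <= (q + 1) ^ k * q.
Proof.
elim: k => [|k IHk]; first by rewrite !expn0 !mul1n addn0.
have : q ^ k <= (q + 1) ^ k by apply/leq_expn2r/leq_addr.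
rewrite !expnS; nia.
Qed.

Lemma exp2_mul_leq q m : 0 < q -> 2 ^ m * q ^ (q * m) <= (q + 1) ^ (q * m).
Proof.
move=> q_gt0; rewrite !expnM -expnMn; apply: leq_expn2r.
by rewrite -(leq_pmul2r q_gt0); have := bernoulli_expn q q; nia.
Qed.

Lemma linear_lt_exp2 a b N : exists s, N <= s /\ a + b * s < 2 ^ s.
Proof.
set r := a + 2 * b + N; exists (2 * r).
have r_lt : r < 2 ^ r by apply: ltn_expl.
have -> : 2 ^ (2 * r) = 2 ^ r * 2 ^ r by rewrite -expnD addnn mul2n.
split; first by rewrite /r; lia.
have : 2 * b <= r /\ a <= r by rewrite /r; lia.
nia.
Qed.

Lemma poly_lt_exp2 C a E N : exists m, N <= m /\ C * (a * m + 1) ^ E < 2 ^ m.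
Proof.
have [s [le_Ns lt_s]] := linear_lt_exp2 (C + a * E) E N.
have a_lt : a < 2 ^ a by apply: ltn_expl.
have s_lt : s < 2 ^ s by apply: ltn_expl.
exists (2 ^ s); split; first by apply: leq_trans le_Ns (ltnW s_lt).
have base_le : a * 2 ^ s + 1 <= 2 ^ (a + s).
  rewrite expnD (leq_trans _ (leq_mul a_lt (leqnn _))) // mulSn addnC leq_add2r.
  by rewrite expn_gt0.
apply: (@leq_ltn_trans (C * 2 ^ ((a + s) * E))).
  by rewrite leq_mul2l expnM leq_expn2r ?orbT.
apply: (@leq_trans (2 ^ (C + (a + s) * E))).
  by rewrite expnD ltn_pmul2r ?expn_gt0 // ltn_expl.
by rewrite leq_exp2l // mulnDl (mulnC s) addnA ltnW.
Qed.

Lemma exp_dominates_poly p q C E N : 0 < q < p ->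
  exists n, N <= n /\ q ^ n * (C * (2 * n + 1) ^ E) < p ^ n.
Proof.
case/andP=> q_gt0 lt_qp.
have [m [le_Nm lt_m]] := poly_lt_exp2 C (2 * q) E N.
exists (q * m); split; first by rewrite (leq_trans le_Nm) ?leq_pmull.
apply: (@leq_trans (2 ^ m * q ^ (q * m))).
  by rewrite mulnC ltn_pmul2r ?expn_gt0 ?q_gt0 // mulnA.
apply: leq_trans (exp2_mul_leq m q_gt0) _.
by apply: leq_expn2r; rewrite addn1.
Qed.

Lemma natpoly_le cs m M : 0 < M -> m <= M ->
  natpoly cs m <= (\sum_(i < size cs) nth 0 cs i) * M ^ size cs.
Proof.
move=> M_gt0 le_mM; rewrite /natpoly big_distrl /=; apply: leq_sum => i _.
rewrite leq_mul2l (leq_trans (leq_expn2r i le_mM)) ?orbT //.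
by rewrite leq_pexp2l // ltnW.
Qed.

Lemma uniq_rel_image (T U : eqType) (R : T -> U -> Prop) (l : seq T) :
  uniq l -> (forall x, x \in l -> exists y, R x y) ->
  (forall x x' y, R x y -> R x' y -> x = x') ->
  exists l' : seq U,
    [/\ uniq l', size l' = size l & forall y, y \in l' -> exists2 x, x \in l & R x y].
Proof.
move=> + R_total R_inj; elim: l R_total => [|x l IHl] R_total /=.
  by exists [::].
case/andP=> x_notin_l /IHl[y y_l|l' [uniq_l' size_l' l'_img]].
  by apply: R_total; rewrite inE y_l orbT.
have [y Rxy] := R_total x (mem_head x l).
exists (y :: l'); split=> /=; first 1 last.
- by rewrite size_l'.
- move=> z; rewrite inE => /predU1P[->|/l'_img[x' x'_l Rx'z]].
    by exists x; rewrite ?mem_head.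
  by exists x'; rewrite // inE x'_l orbT.
rewrite uniq_l' andbT; apply/negP => /l'_img[x' x'_l Rx'y].
by move: x_notin_l; rewrite (R_inj _ _ _ Rxy Rx'y) x'_l.
Qed.

Lemma uniq_pairs_size_le (Q : finType) (T : eqType) (P : T -> Prop) (B : nat)
    (l : seq (Q * T)) :
  (forall s : seq T, uniq s -> (forall x, x \in s -> P x) -> size s <= B) ->
  uniq l -> (forall c, c \in l -> P c.2) -> size l <= #|Q| * B.
Proof.
move=> size_le uniq_l P_l.
have -> : size l = \sum_(q : Q) count (fun c => c.1 == q) l.
  elim: l {uniq_l P_l} => [|c l IHl] /=; first by rewrite big1.
  rewrite big_split /= -IHl (bigD1 c.1) //= eqxx big1 ?add1n ?addn0 // => q.
  by rewrite eq_sym => /negbTE->.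
rewrite -sum_nat_const; apply: leq_sum => q _.
rewrite -size_filter -(size_map snd); apply: size_le.
- rewrite map_inj_in_uniq ?filter_uniq // => -[q1 x1] [q2 x2].
  by rewrite !mem_filter /= => /andP[/eqP-> _] /andP[/eqP-> _] ->.
- by move=> x /mapP[c]; rewrite mem_filter => /andP[_ /P_l] + ->.
Qed.

Local Open Scope group_scope.

Section Balls.
Variables (G : groupType) (X : seq G).

Lemma gprodE (w : seq G) : gprod w = \prod_(x <- w) x.
Proof.
suff foldlE g : foldl (@mul G) g w = g * \prod_(x <- w) x by rewrite /gprod foldlE mul1g.
elim: w g => [|y w IHw] g /=; first by rewrite big_nil mulg1.
by rewrite IHw big_cons mulgA.
Qed.

Lemma in_ball_leq m n g : m <= n -> in_ball X m g -> in_ball X n g.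
Proof. by move=> le_mn [w [Xw [size_w <-]]]; exists w; rewrite (leq_trans size_w). Qed.

Lemma in_ball1 n : in_ball X n 1.
Proof. by exists [::]. Qed.

Lemma in_ballM m n g h : in_ball X m g -> in_ball X n h -> in_ball X (m + n) (g * h).
Proof.
move=> [v [Xv [size_v <-]]] [w [Xw [size_w <-]]]; exists (v ++ w); split; [|split].
- by move=> y; rewrite mem_cat => /orP[]; [apply: Xv | apply: Xw].
- by rewrite size_cat leq_add.
- by rewrite !gprodE big_cat.
Qed.

Lemma in_ball_seq (s : seq G) : generates X -> exists n, forall g, g \in s -> in_ball X n g.
Proof.
move=> genX; elim: s => [|g s [n ball_s]]; first by exists 0.
have [w [Xw <-]] := genX g.
exists (size w + n) => h; rewrite inE => /predU1P[->|/ball_s].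
  by apply: in_ball_leq (leq_addr _ _) _; exists w.
exact/in_ball_leq/leq_addl.
Qed.

End Balls.

Section Computations.
Variables (G : groupType) (Sigma : finType) (A : gautomaton G Sigma).
Implicit Types (c : seq (step A)) (x y : seq Sigma) (q : state A) (cfg : state A * G).

Definition run_end q c : state A := last q [seq s.2.1 | s <- c].

Lemma run_end_cat q c1 c2 : run_end q (c1 ++ c2) = run_end (run_end q c1) c2.
Proof. by rewrite /run_end map_cat last_cat. Qed.

Lemma valid_from_cat q c1 c2 :
  valid_from A q (c1 ++ c2) <-> valid_from A q c1 /\ valid_from A (run_end q c1) c2.
Proof. by elim: c1 q => [|[s [q' m]] c1 IHc1] q /=; rewrite ?IHc1; tauto. Qed.

Lemma comp_word_cat c1 c2 : comp_word A (c1 ++ c2) = comp_word A c1 ++ comp_word A c2.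
Proof. by rewrite /comp_word map_cat pmap_cat. Qed.

Lemma comp_register_cat c1 c2 :
  comp_register A (c1 ++ c2) = comp_register A c1 * comp_register A c2.
Proof. by rewrite /comp_register map_cat !gprodE big_cat. Qed.

Lemma comp_word_catP c x y : comp_word A c = x ++ y ->
  exists c1 c2, [/\ c = c1 ++ c2, comp_word A c1 = x & comp_word A c2 = y].
Proof.
elim: c x => [|[[a|] st] c IHc] x.
- by case: x => //= <-; exists [::], [::].
- rewrite /comp_word /=; case: x => [|b x] /=.
    by move=> <-; exists [::], ((Some a, st) :: c).
  case=> -> /IHc[c1 [c2 [-> <- <-]]].
  by exists ((Some b, st) :: c1), c2.
- by case/IHc=> c1 [c2 [-> <- <-]]; exists ((None, st) :: c1), c2.
Qed.

Definition reaches c x cfg :=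
  [/\ valid_from A (q0 A) c, comp_word A c = x,
      run_end (q0 A) c = cfg.1 & comp_register A c = cfg.2].

Definition completes cfg y := exists c,
  [/\ valid_from A cfg.1 c, comp_word A c = y,
      accepting (run_end cfg.1 c) & cfg.2 * comp_register A c = 1].

Lemma accepts_cat c x y cfg : reaches c x cfg -> completes cfg y -> accepts A (x ++ y).
Proof.
case=> valid_c <- end_c reg_c [c' [valid_c' <- acc_c' reg_c']].
exists (c ++ c'); split.
- by apply/valid_from_cat; rewrite end_c.
- by rewrite comp_word_cat.
- by rewrite /comp_final -/(run_end _ _) run_end_cat end_c.
- by rewrite comp_register_cat reg_c.
Qed.

Lemma accepting_comp_catP c x y : accepting_comp A (x ++ y) c ->
  exists c1 cfg, [/\ reaches c1 x cfg, size c1 <= size c & completes cfg y].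
Proof.
case=> valid_c /comp_word_catP[c1 [c2 [def_c word_c1 word_c2]]] acc_c reg_c.
move: valid_c acc_c reg_c; rewrite def_c => /valid_from_cat[valid_c1 valid_c2] acc_c reg_c.
exists c1, (run_end (q0 A) c1, comp_register A c1); split=> //.
- by rewrite size_cat leq_addr.
- exists c2; split=> //; first by rewrite -run_end_cat.
  by rewrite -comp_register_cat.
Qed.

Lemma multipliers_in_ball (X : seq G) : generates X ->
  exists K, forall q s q' m, (q', m) \in delta q s -> in_ball X K m.
Proof.
move=> genX.
have [K ball_K] := in_ball_seq
  [seq qm.2 | qs <- enum {: state A * option Sigma}, qm <- delta qs.1 qs.2] genX.
exists K => q s q' m qm_in; apply: ball_K; apply/allpairsPdep.
by exists (q, s), (q', m); rewrite mem_enum.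
Qed.

Lemma register_in_ball (X : seq G) K q c :
  (forall q s q' m, (q', m) \in delta q s -> in_ball X K m) ->
  valid_from A q c -> in_ball X (K * size c) (comp_register A c).
Proof.
move=> ball_K; elim: c q => [|[s [q' m]] c IHc] q /=; first by rewrite muln0 => _; exact: in_ball1.
case=> qm_in /IHc ball_c; rewrite mulnS /comp_register /= gprodE big_cons -gprodE.
exact: in_ballM (ball_K _ _ _ _ qm_in) ball_c.
Qed.

End Computations.

Notation letter X := (bool * 'I_(size X))%type.

Section WordProblem.
Variables (H : groupType) (X : seq H).

Definition letter_val (l : letter X) : H :=
  if l.1 then nth 1 X l.2 else (nth 1 X l.2)^-1.

Definition letter_inv (l : letter X) : letter X := (~~ l.1, l.2).

Definition word_val (u : seq (letter X)) : H := \prod_(l <- u) letter_val l.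

Definition word_problem : language (letter X) := fun u => word_val u = 1.

Definition word_problem_automaton : gautomaton H (letter X) :=
  @GAutomaton H _ unit (fun _ s => if s is Some l then [:: (tt, letter_val l)] else [::])
    tt predT.

Lemma word_problem_in_LG : in_LG H word_problem.
Proof.
exists word_problem_automaton => u; split.
- move=> val_u; exists [seq (Some l, (tt, letter_val l)) | l <- u]; split.
  + by elim: u {val_u} => //= l u valid_u; rewrite mem_seq1.
  + by rewrite /comp_word -map_comp; apply: map_pK.
  + by [].
  + by rewrite /comp_register -map_comp gprodE big_map.
- case=> c [valid_c <- _ reg_c]; rewrite /word_problem -{}reg_c /word_val.
  elim: c valid_c => [|[[l|] [[] m]] c IHc] /=; [by rewrite big_nil | | by case].
  rewrite mem_seq1 => -[/eqP[->] /IHc val_c].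
  by rewrite /comp_register /comp_word /= !gprodE !big_cons -gprodE val_c.
Qed.

Lemma in_ball_word n h : in_ball X n h -> exists u, size u <= n /\ word_val u = h.
Proof.
case=> w [Xw [size_w <-]]; suff [u def_w] : exists u, map letter_val u = w.
  by exists u; split; [rewrite -(size_map letter_val) def_w | rewrite -def_w gprodE big_map].
elim: w Xw {size_w} => [|y w IHw] Xw; first by exists [::].
have [u <-] : exists u, map letter_val u = w.
  by apply: IHw => z z_w; apply: Xw; rewrite inE z_w orbT.
have letter_of x : x \in X -> exists i : 'I_(size X), nth 1 X i = x.
  by move=> x_X; exists (Ordinal (etrans (index_mem x X) x_X)); rewrite nth_index.
case: (Xw y (mem_head y w)) => /letter_of[i val_i].
- by exists ((true, i) :: u); rewrite /= /letter_val val_i.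
- by exists ((false, i) :: u); rewrite /= /letter_val val_i invgK.
Qed.

Lemma word_problem_inv u : word_problem (u ++ rev (map letter_inv u)).
Proof.
have val_inv l : letter_val (letter_inv l) = (letter_val l)^-1.
  by case: l => -[] i; rewrite /letter_val /= ?invgK.
rewrite /word_problem /word_val big_cat -map_rev big_map.
by rewrite (eq_bigr _ (fun l _ => val_inv l)) prodgV revK; apply: mulgV.
Qed.

End WordProblem.

Arguments word_problem {H} X.
Arguments letter_inv {H X}.

Section TimeBoundedWordProblem.
Variables (G H : groupType) (XG : seq G) (XH : seq H).
Variables (A : gautomaton G (letter XH)) (t : nat -> nat) (K : nat).
Hypothesis recA : recognizes A (word_problem XH).
Hypothesis timeA : weakly_time_bounded A (word_problem XH) t.
Hypothesis ball_K : forall (q : state A) s q' m, (q', m) \in delta q s -> in_ball XG K m.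

Definition encodes r (h : H) (cfg : state A * G) := exists u c y,
  [/\ word_val u = h, reaches c u cfg, size c <= r & completes cfg y].

Lemma encodes_inj r h h' cfg : encodes r h cfg -> encodes r h' cfg -> h = h'.
Proof.
case=> u [c [y [<- reach_c _ completes_y]]] [u' [c' [_ [<- reach_c' _ _]]]].
have /recA := accepts_cat reach_c completes_y.
have /recA := accepts_cat reach_c' completes_y.
rewrite /word_problem /word_val !big_cat /= => val_u'y val_uy.
by apply: (@mulIg _ (\prod_(l <- y) letter_val l)); rewrite val_uy val_u'y.
Qed.

Lemma encodes_in_ball r h cfg : encodes r h cfg -> in_ball XG (K * r) cfg.2.
Proof.
case=> u [c [y [_ [valid_c _ _ <-] size_c _]]].
exact: in_ball_leq (leq_mul (leqnn K) size_c) (register_in_ball ball_K valid_c).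
Qed.

Lemma encodes_exists n r h : (forall k, k <= n -> t (2 * k) <= r) ->
  in_ball XH n h -> exists cfg, encodes r h cfg.
Proof.
move=> t_le /in_ball_word[u [size_u <-]].
have [c [acc_c size_c]] := timeA (word_problem_inv u).
have [c1 [cfg [reach_c1 le_c1 completes_v]]] := accepting_comp_catP acc_c.
exists cfg, u, c1, (rev (map letter_inv u)); split=> //.
rewrite (leq_trans le_c1) // (leq_trans size_c) //.
by rewrite size_cat size_rev size_map addnn -mul2n t_le.
Qed.

Lemma growth_le_word_problem n r B : (forall k, k <= n -> t (2 * k) <= r) ->
  growth_le XG (K * r) B -> growth_le XH n (#|state A| * B).
Proof.
move=> t_le growthG l uniq_l ball_l.
have [|l' [uniq_l' <- l'_img]] := uniq_rel_image uniq_l _ (@encodes_inj r).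
  by move=> h /ball_l; apply: encodes_exists.
apply: uniq_pairs_size_le growthG uniq_l' _ => cfg /l'_img[h _].
exact: encodes_in_ball.
Qed.

End TimeBoundedWordProblem.

Local Close Scope group_scope.

Theorem theorem4p4 (G H : groupType) :
  fg_polynomial_growth G -> fg_exponential_growth H ->
  forall (cs : seq nat) (t : nat -> nat), (forall n, t n <= natpoly cs n) ->
  exists (Sigma : finType) (L : language Sigma),
    in_LG H L /\ ~ in_LG_weak G t L.
Proof.
move=> [XG [genG [c [d growthG]]]] [XH [_ [p [q [N [lt_qp growthH]]]]]] cs t t_le.
exists (letter XH), (word_problem XH); split; first exact: word_problem_in_LG.
case=> A [recA timeA].
have [K ball_K] := multipliers_in_ball A genG.
set S := \sum_(i < size cs) nth 0 cs i.
set C := #|state A| * (c * ((K * S) ^ d + 1)).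
have [n [le_Nn lt_n]] := exp_dominates_poly C (size cs * d) N lt_qp.
have [l [uniq_l [ball_l ge_l]]] := growthH n le_Nn.
set Z := (2 * n + 1) ^ size cs.
have t2_le k : k <= n -> t (2 * k) <= S * Z.
  by move=> le_kn; rewrite (leq_trans (t_le _)) // natpoly_le //; lia.
have le_l := growth_le_word_problem recA timeA ball_K t2_le (growthG _) uniq_l ball_l.
have le_C : #|state A| * (c * (K * (S * Z)) ^ d + c) <= C * Z ^ d.
  rewrite mulnA expnMn /C -mulnA leq_mul2l mulnDr muln1 mulnDl mulnA leq_add2l.
  by rewrite leq_pmulr ?orbT // !expn_gt0 addn1.
have := leq_trans ge_l (leq_mul (leqnn (q ^ n)) (leq_trans le_l le_C)).
by rewrite -expnM leqNgt lt_n.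
Qed.
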